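(* Let $\Omega\subset\mathbb H^n$ be an open, horizontally bounded and (Euclidean) convex set. Then $$\mathcal D(\xi)\le\Bigl(\frac{\sqrt[4]{97}}{2}+\frac13\Bigr)\mathrm{dist}_H(\xi,\partial\Omega)\qquad\forall\xi\in\Omega,$$ where $\mathcal D(\xi)=\min\{\mathrm{dist}_H(\zeta,\partial\Omega\cap H_\zeta):\zeta\in\overline{B_H(\xi,\mathrm{dist}_H(\xi,\partial\Omega)/3)}\}$.
   Context: $\mathbb H^n=\mathbb C^n\times\mathbb R\cong\mathbb R^{2n+1}$ with real coordinates $(x,y,t)$, $z=x+iy$, group law $(z,t)\circ(z',t')=(z+z',t+t'+2\,\mathrm{Im}\langle z,z'\rangle)$, $\langle z,z'\rangle=\sum_j z_j\overline{z'_j}$. Horizontal plane at $\xi_0=(x_0,y_0,t_0)$: $H_{\xi_0}=\{(x,y,t):t=t_0+2(x\cdot y_0-x_0\cdot y)\}$. Gauge $N(z,t)=(|z|^4+t^2)^{1/4}$, $d_H(\xi,\zeta)=N(\zeta^{-1}\circ\xi)$, $B_H(\xi,r)=\{\zeta:d_H(\zeta,\xi)<r\}$, $\mathrm{dist}_H(\xi,A)=\inf_{\zeta\in A}d_H(\xi,\zeta)$, $\mathrm{diam}_H$ the $d_H$-diameter; $\Omega$ is horizontally bounded if $\sup\{\mathrm{diam}_H(\Omega\cap H_\xi):\xi\in\Omega\}<\infty$. *)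

From HB Require Import structures.
From mathcomp Require Import all_boot all_order all_algebra.
From mathcomp Require Import all_classical all_reals.
Set Implicit Arguments. Unset Strict Implicit. Unset Printing Implicit Defensive.
Import Order.TTheory GRing.Theory Num.Theory.
Local Open Scope classical_set_scope.
Local Open Scope ring_scope.

Section Heis.
Variables (R : realType) (n : nat).

(* A point (x, y, t) of H^n = C^n x R = R^(2n+1), z = x + i y. *)
Record hpt := Hpt { hx : 'I_n -> R; hy : 'I_n -> R; ht : R }.

(* group law (z,t) o (z',t') = (z+z', t+t'+2 Im<z,z'>),
   Im <z,z'> = sum_j (y_j x'_j - x_j y'_j) *)
Definition hmul (p q : hpt) : hpt :=
  Hpt (fun j => hx p j + hx q j) (fun j => hy p j + hy q j)
      (ht p + ht q + 2 * \sum_(j < n) (hy p j * hx q j - hx p j * hy q j)).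

Definition hinv (p : hpt) : hpt :=
  Hpt (fun j => - hx p j) (fun j => - hy p j) (- ht p).

Definition znorm2 (p : hpt) : R := \sum_(j < n) (hx p j ^+ 2 + hy p j ^+ 2).

Definition gauge (p : hpt) : R :=
  Num.sqrt (Num.sqrt (znorm2 p ^+ 2 + ht p ^+ 2)).

Definition dH (xi zeta : hpt) : R := gauge (hmul (hinv zeta) xi).

Definition ballH (xi : hpt) (r : R) : set hpt := [set zeta | dH zeta xi < r].

Definition distH (xi : hpt) (A : set hpt) : R := inf [set dH xi zeta | zeta in A].

Definition hplane (xi0 : hpt) : set hpt :=
  [set p | ht p = ht xi0 + 2 * \sum_(j < n) (hx p j * hy xi0 j - hx xi0 j * hy p j)].

Definition eucl2 (p q : hpt) : R :=
  \sum_(j < n) ((hx p j - hx q j) ^+ 2 + (hy p j - hy q j) ^+ 2) + (ht p - ht q) ^+ 2.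

Definition eball (p : hpt) (r : R) : set hpt := [set q | eucl2 p q < r ^+ 2].

Definition eopen (A : set hpt) : Prop :=
  forall p, A p -> exists2 r : R, 0 < r & eball p r `<=` A.

Definition eclosure (A : set hpt) : set hpt :=
  [set p | forall r : R, 0 < r -> exists q, A q /\ eball p r q].

Definition eboundary (A : set hpt) : set hpt :=
  [set p | forall r : R, 0 < r ->
     (exists q, A q /\ eball p r q) /\ (exists q, ~ A q /\ eball p r q)].

Definition econvex (A : set hpt) : Prop :=
  forall p q (l : R), A p -> A q -> 0 <= l -> l <= 1 ->
    A (Hpt (fun j => (1 - l) * hx p j + l * hx q j)
           (fun j => (1 - l) * hy p j + l * hy q j)
           ((1 - l) * ht p + l * ht q)).

Definition hor_bounded (Om : set hpt) : Prop :=
  exists M : R, forall xi, Om xi ->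
    forall a b, (Om `&` hplane xi) a -> (Om `&` hplane xi) b -> dH a b <= M.

Definition calD (Om : set hpt) (xi : hpt) : R :=
  inf [set distH zeta (eboundary Om `&` hplane zeta) | zeta in
        eclosure (ballH xi (distH xi (eboundary Om) / 3))].

End Heis.

From HB Require Import structures.
From mathcomp Require Import all_boot all_order all_algebra.
From mathcomp Require Import all_classical all_reals.
From mathcomp.algebra_tactics Require Import ring lra.
Import Order.TTheory GRing.Theory Num.Theory.
Local Open Scope classical_set_scope.
Local Open Scope ring_scope.

(* Let d = dist_H(xi, bd Om) and pick w in bd Om with d_H(xi, w) < 1.001 d.  After a left
   translation by xi^-1, a unitary rotation, a reflection and the dilation by d, the point w
   becomes (r, 0, T) in a copy of H^1 through xi, with r, T >= 0, and r, T <= 1.004.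
   If T <= 3r/5, w lies in the horizontal plane of zeta = (0, T/(2r), 0), which is 3d/10-close
   to xi, and d_H(zeta, w) <= 1.9 d.  Otherwise put zeta = (0, 3/10, 0) and p = (-1/4, 0, 99/100):
   both lie in the Koranyi ball B_H(xi, d), hence in Om, and w lies on a Euclidean segment from
   p to a point q of the horizontal plane of zeta, so q is not in Om by convexity.  The segment
   from zeta to q stays in that plane and crosses bd Om within distance 1.9 d of zeta.
   Finally 1.9 <= 97^(1/4)/2 + 1/3. *)

Section RealFacts.
Context {R : realType}.

Lemma inf_le_of_ge0 (E : set R) x : (forall y, E y -> 0 <= y) -> E x -> inf E <= x.
Proof. by move=> E_ge0 Ex; apply: (ge_inf _ Ex); exists 0 => y /E_ge0. Qed.

Lemma inf_ge0 (E : set R) : (forall y, E y -> 0 <= y) -> 0 <= inf E.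
Proof.
move=> E_ge0; have [->|/set0P[x Ex]] := eqVneq E set0; first by rewrite inf0.
by apply: lb_le_inf; [exists x | move=> y /E_ge0].
Qed.

Lemma sqrtr_le (X c : R) : 0 <= c -> X <= c ^+ 2 -> Num.sqrt X <= c.
Proof. by move=> c_ge0 le_Xc; rewrite -(ger0_norm c_ge0) -sqrtr_sqr ler_sqrt ?sqr_ge0. Qed.

Lemma le_sqrtr (X a : R) : 0 <= a -> a ^+ 2 <= X -> a <= Num.sqrt X.
Proof.
move=> a_ge0 le_aX; rewrite -(ger0_norm a_ge0) -sqrtr_sqr ler_sqrt //.
exact: le_trans (sqr_ge0 _) le_aX.
Qed.

Lemma nineteen_tenths_le : 19 / 10 <= Num.sqrt (Num.sqrt 97) / 2 + 3^-1 :> R.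
Proof.
have : 47 / 15 <= Num.sqrt (Num.sqrt 97) :> R.
  by apply: le_sqrtr; [lra | apply: le_sqrtr; rewrite ?sqr_ge0 // -exprM /=; lra].
by rewrite -div1r; lra.
Qed.

Lemma near_unit_bounds (r T : R) : 0 <= r -> 0 <= T ->
  (r ^+ 2 + 0 ^+ 2) ^+ 2 + T ^+ 2 < (1001 / 1000) ^+ 4 -> r <= 1004 / 1000 /\ T <= 1004 / 1000.
Proof.
rewrite expr0n addr0 => r_ge0 T_ge0 lt_4.
have r2_ge0 := sqr_ge0 r.
have le_r2 : r ^+ 2 <= 1004 / 1000 by nra.
split; nra.
Qed.

Lemma flat_case_bounds (r T : R) : 0 <= r -> 0 <= T -> T <= 3 / 5 * r -> r <= 1004 / 1000 ->
  exists b : R, [/\ 0 <= b, b <= 3 / 10, T = 2 * b * r & r ^+ 2 + b ^+ 2 <= (19 / 10) ^+ 2].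
Proof.
move=> r_ge0 T_ge0 le_Tr le_r.
have [r0|r_neq0] := eqVneq r 0.
  by exists 0; move: le_Tr; rewrite r0 !expr0n /=; split; lra.
have r_gt0 : 0 < r by rewrite lt_def r_neq0.
have b_ge0 : 0 <= T / (2 * r) by rewrite divr_ge0; lra.
have b_le : T / (2 * r) <= 3 / 10 by rewrite ler_pdivrMr; lra.
by exists (T / (2 * r)); split => //; [field | nra].
Qed.

(* [(qx, 0, qt)] is the point of the line [t = 3x/5] such that [(r, 0, T)] lies on the segment
   from it to [(-1/4, 0, 99/100)]. *)
Lemma steep_case_witness (r T : R) : 0 <= r -> 3 / 5 * r < T -> T <= 1004 / 1000 ->
  exists l qx qt : R, [/\ 0 <= l <= 1, qt = 3 / 5 * qx, 0 <= qx <= 187 / 100,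
    (1 - l) * qx + l * - (1 / 4) = r & (1 - l) * qt + l * (99 / 100) = T].
Proof.
move=> r_ge0 lt_rT le_T; pose l := (T - 3 / 5 * r) / (57 / 50).
have def_l : 57 / 50 * l = T - 3 / 5 * r by rewrite /l; field.
have l_lt1 : l < 1 by lra.
have l_ge0 : 0 <= l by rewrite divr_ge0; lra.
have l'_neq0 : 1 - l != 0 by rewrite subr_eq0 eq_sym lt_eqF.
exists l, ((r + l / 4) / (1 - l)), (3 / 5 * ((r + l / 4) / (1 - l))).
split => //; first by rewrite l_ge0 ltW.
- by rewrite divr_ge0 ?ler_pdivrMr //=; lra.
- by field.
- have -> : (1 - l) * (3 / 5 * ((r + l / 4) / (1 - l))) = 3 / 5 * (r + l / 4) by field.
  lra.
Qed.

Lemma steep_case_distance (u qx : R) : 0 <= u <= 1 -> 0 <= qx <= 187 / 100 ->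
  (u * qx) ^+ 2 + (3 / 10 * u) ^+ 2 <= (19 / 10) ^+ 2.
Proof.
move=> /andP[u_ge0 u_le1] /andP[qx_ge0 qx_le].
have : u * qx <= 187 / 100 by nra.
have : 0 <= u * qx by exact: mulr_ge0.
nra.
Qed.

End RealFacts.

Section Heisenberg.
Context {R : realType} {n : nat}.
Local Notation hpt := (hpt R n).
Implicit Types (Om : set hpt) (p q w xi zeta : hpt).

Lemma hptE p q : hx p =1 hx q -> hy p =1 hy q -> ht p = ht q -> p = q.
Proof. by case: p q => a b c [a' b' c'] /= /funext-> /funext-> ->. Qed.

Lemma dH_ge0 p q : 0 <= dH p q.
Proof. exact: sqrtr_ge0. Qed.

Lemma distH_ge0 xi (A : set hpt) : 0 <= distH xi A.
Proof. by apply: inf_ge0 => _ [z _ <-]; apply: dH_ge0. Qed.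

Lemma distH_le_dH xi (A : set hpt) zeta : A zeta -> distH xi A <= dH xi zeta.
Proof. by move=> Azeta; apply: inf_le_of_ge0 => [_ [z _ <-]|]; [apply: dH_ge0 | exists zeta]. Qed.

Definition symp p q : R := \sum_(j < n) (hy p j * hx q j - hx p j * hy q j).

Arguments symp : simpl never.

Lemma ht_hmul p q : ht (hmul p q) = ht p + ht q + 2 * symp p q.
Proof. by []. Qed.

Lemma ht_hinv p : ht (hinv p) = - ht p.
Proof. by []. Qed.

Lemma symp_antisym p q : symp q p = - symp p q.
Proof. by rewrite /symp -sumrN; apply: eq_bigr => j _; ring. Qed.

Lemma symp_hinvl p q : symp (hinv p) q = - symp p q.
Proof. by rewrite /symp -sumrN; apply: eq_bigr => j _ /=; ring. Qed.

Lemma symp_hinvr p q : symp p (hinv q) = - symp p q.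
Proof. by rewrite symp_antisym symp_hinvl opprK symp_antisym. Qed.

Lemma symp_hmull p q w : symp (hmul p q) w = symp p w + symp q w.
Proof. by rewrite /symp -big_split; apply: eq_bigr => j _ /=; ring. Qed.

Lemma symp_hmulr p q w : symp w (hmul p q) = symp w p + symp w q.
Proof. by rewrite symp_antisym symp_hmull opprD -!symp_antisym. Qed.

Lemma symp_xx p : symp p p = 0.
Proof. by rewrite /symp big1 // => j _; ring. Qed.

Lemma hmul_hinvKl p q : hmul p (hmul (hinv p) q) = q.
Proof.
apply: hptE => [j|j|];
  by rewrite ?(ht_hmul, ht_hinv, symp_hmulr, symp_hinvl, symp_hinvr, symp_xx) /=; ring.
Qed.

Lemma hinv_hmul2l p q w : hmul (hinv (hmul w q)) (hmul w p) = hmul (hinv q) p.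
Proof.
apply: hptE => [j /=|j /=|]; try ring.
rewrite ht_hmul ht_hinv !ht_hmul ht_hinv !symp_hinvl !symp_hmull !symp_hmulr symp_xx.
by rewrite [symp q w]symp_antisym; ring.
Qed.

Lemma hplane_hinv_hmul zeta p : hplane zeta p <-> ht (hmul (hinv zeta) p) = 0.
Proof.
rewrite /hplane [in X in X <-> _]/=.
have -> : \sum_(j < n) (hx p j * hy zeta j - hx zeta j * hy p j) = symp zeta p.
  by apply: eq_bigr => j _; ring.
by rewrite ht_hmul ht_hinv symp_hinvl; split => ?; lra.
Qed.

Definition seg p q (s : R) : hpt :=
  Hpt (fun j => (1 - s) * hx p j + s * hx q j)
      (fun j => (1 - s) * hy p j + s * hy q j)
      ((1 - s) * ht p + s * ht q).

Lemma seg0 p q : seg p q 0 = p.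
Proof. by apply: hptE => [j|j|] /=; ring. Qed.

Lemma seg1 p q : seg p q 1 = q.
Proof. by apply: hptE => [j|j|] /=; ring. Qed.

Lemma eucl2_ge0 p q : 0 <= eucl2 p q.
Proof. by rewrite addr_ge0 ?sqr_ge0 ?sumr_ge0 // => j _; rewrite addr_ge0 ?sqr_ge0. Qed.

Lemma eucl2_xx p : eucl2 p p = 0.
Proof. by rewrite /eucl2 big1 => [|j _]; rewrite !subrr expr0n ?addr0. Qed.

Lemma eucl2_seg p q s s' : eucl2 (seg p q s) (seg p q s') = (s - s') ^+ 2 * eucl2 p q.
Proof.
rewrite /eucl2 /= mulrDr big_distrr /=; congr (_ + _); last by ring.
by apply: eq_bigr => j _; ring.
Qed.

Lemma eopen_eboundary Om p : eopen Om -> eboundary Om p -> ~ Om p.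
Proof.
move=> Om_open bd_p Om_p; have [r r_gt0 sub] := Om_open p Om_p.
by have [_ [q [Om'_q ball_q]]] := bd_p r r_gt0; apply/Om'_q/sub.
Qed.

Lemma seg_eball p q (r : R) : 0 < r ->
  exists2 e : R, 0 < e & forall a b, `|a - b| < e -> eball (seg p q a) r (seg p q b).
Proof.
move=> r_gt0; set E := eucl2 p q; have E_ge0 : 0 <= E := eucl2_ge0 p q.
have sqrtE_gt0 : 0 < Num.sqrt (E + 1) by rewrite sqrtr_gt0; lra.
have e_gt0 : 0 < r / Num.sqrt (E + 1) by exact: divr_gt0.
exists (r / Num.sqrt (E + 1)) => // a b; set e := r / _ => /[!ltr_norml] /andP[lt_ea lt_ae].
have e2E : e ^+ 2 * (E + 1) = r ^+ 2.
  by rewrite expr_div_n sqr_sqrtr ?mulfVK ?gt_eqF //; lra.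
have lt_ab2 : (a - b) ^+ 2 < e ^+ 2 by nra.
rewrite /eball /= eucl2_seg -/E -e2E.
by have := ler_wpM2r E_ge0 (ltW lt_ab2); have := exprn_gt0 2 e_gt0; nra.
Qed.

Lemma seg_eboundary Om p q : Om p -> ~ Om q ->
  exists2 s : R, 0 <= s <= 1 & eboundary Om (seg p q s).
Proof.
move=> Om_p Om'_q; pose S := [set s : R | 0 <= s <= 1 /\ Om (seg p q s)].
have S0 : S 0 by split; rewrite ?lexx ?ler01 ?seg0.
have S_sup : has_sup S by split; [exists 0 | exists 1 => s [/andP[]]].
have sup_ge0 : 0 <= sup S := sup_upper_bound S_sup S0.
have sup_le1 : sup S <= 1 by apply: ge_sup; [exists 0 | move=> s [/andP[]]].
exists (sup S); first by rewrite sup_ge0 sup_le1.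
move=> r r_gt0; have [e e_gt0 near] := seg_eball p q r r_gt0.
split.
  have [s [/andP[s_ge0 s_le1] Om_s] lt_s] := sup_adherent e_gt0 S_sup.
  exists (seg p q s); split => //; apply: near.
  rewrite ger0_norm; first lra.
  by rewrite subr_ge0; apply: sup_upper_bound => //; split => //; apply/andP.
pose t := Order.min 1 (sup S + e / 2).
have [t_le1 t_le] : t <= 1 /\ t <= sup S + e / 2 by split; rewrite ge_min lexx ?orbT.
have le_sup_t : sup S <= t by rewrite le_min sup_le1; lra.
exists (seg p q t); split; last by apply: near; rewrite ler0_norm; lra.
move=> Om_t; have le_t_sup : t <= sup S.
  by apply: sup_upper_bound => //; split => //; apply/andP; split; lra.
have t_eq1 : t = 1.
  have [lt_1|le_1] := ltP 1 (sup S + e / 2); first exact: min_l (ltW lt_1).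
  by have := min_r le_1; rewrite -/t; lra.
by apply: Om'_q; rewrite -(seg1 p q) -t_eq1.
Qed.

Definition escale (s : R) p : hpt :=
  Hpt (fun j => s * hx p j) (fun j => s * hy p j) (s * ht p).

Arguments escale : simpl never.

Lemma symp_segl p q w s : symp (seg p q s) w = (1 - s) * symp p w + s * symp q w.
Proof. by rewrite /symp !big_distrr -big_split; apply: eq_bigr => j _ /=; ring. Qed.

Lemma hinv_seg_hmul p q s : hmul (hinv (seg p q s)) p = escale s (hmul (hinv q) p).
Proof.
apply: hptE => [j /=|j /=|]; rewrite /escale /=; try ring.
rewrite -[\sum_(j < n) _]/(symp (hinv (seg p q s)) p) -[\sum_(j < n) _]/(symp (hinv q) p).
by rewrite !symp_hinvl symp_segl symp_xx; ring.
Qed.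

Lemma znorm2_ge0 p : 0 <= znorm2 p.
Proof. by apply: sumr_ge0 => j _; rewrite addr_ge0 ?sqr_ge0. Qed.

Lemma gauge_escale s p : 0 <= s <= 1 -> gauge (escale s p) <= gauge p.
Proof.
move=> /andP[s_ge0 s_le1]; apply/ler_wsqrtr/ler_wsqrtr.
have -> : znorm2 (escale s p) = s ^+ 2 * znorm2 p.
  by rewrite /znorm2 big_distrr; apply: eq_bigr => j _ /=; ring.
have := znorm2_ge0 p; have := sqr_ge0 (ht p); rewrite /escale /=.
set z := znorm2 p; set t := ht p => t2_ge0 z_ge0.
have s2_le1 : s ^+ 2 <= 1 by nra.
have : (s ^+ 2 * z) ^+ 2 <= z ^+ 2 by rewrite exprMn ler_piMl ?sqr_ge0 // expr_le1 ?sqr_ge0.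
have : (s * t) ^+ 2 <= t ^+ 2 by rewrite exprMn ler_piMl ?sqr_ge0 // expr_le1.
lra.
Qed.

Lemma dH_seg p q s : 0 <= s <= 1 -> dH p (seg p q s) <= dH p q.
Proof. by move=> s01; rewrite /dH hinv_seg_hmul gauge_escale. Qed.

(* The segment from [xi] to a point outside [Om] meets the boundary, no farther from [xi]. *)
Lemma lt_dist_eboundary_in Om xi p :
  Om xi -> dH xi p < distH xi (eboundary Om) -> Om p.
Proof.
move=> Om_xi lt_dist; apply/not_notP => Om'_p.
have [s s01 bd_s] := seg_eboundary _ _ _ Om_xi Om'_p.
by have := distH_le_dH xi _ _ bd_s; have := dH_seg xi p s s01; lra.
Qed.

Definition gauge1 (x y t : R) : R := Num.sqrt (Num.sqrt ((x ^+ 2 + y ^+ 2) ^+ 2 + t ^+ 2)).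

Lemma gauge1N x y t : gauge1 (- x) (- y) (- t) = gauge1 x y t.
Proof. by rewrite /gauge1 !sqrrN. Qed.

Lemma gauge1_horizontal x y : gauge1 x y 0 = Num.sqrt (x ^+ 2 + y ^+ 2).
Proof. by rewrite /gauge1 expr0n addr0 sqrtr_sqr ger0_norm // addr_ge0 ?sqr_ge0. Qed.

Lemma gauge1_axis y : 0 <= y -> gauge1 0 y 0 = y.
Proof. by move=> y_ge0; rewrite gauge1_horizontal expr0n add0r sqrtr_sqr ger0_norm. Qed.

Lemma gauge1_lt x y t K : 0 <= K -> gauge1 x y t < K -> (x ^+ 2 + y ^+ 2) ^+ 2 + t ^+ 2 < K ^+ 4.
Proof.
move=> K_ge0; apply: contraTT; rewrite -!leNgt => le_K4.
by apply: le_sqrtr => //; apply: le_sqrtr; rewrite ?sqr_ge0 // -exprM.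
Qed.

Lemma gauge1_lt1 x y t : (x ^+ 2 + y ^+ 2) ^+ 2 + t ^+ 2 < 1 -> gauge1 x y t < 1.
Proof. by move=> lt1; rewrite /gauge1 -sqrtr1 ltr_sqrt // -sqrtr1 ltr_sqrt. Qed.

Lemma znorm2_eq0 p : znorm2 p = 0 -> forall j, hx p j = 0 /\ hy p j = 0.
Proof.
move/eqP; rewrite psumr_eq0 => [/allP z0 j|j _]; last by rewrite addr_ge0 ?sqr_ge0.
move: (z0 j (mem_index_enum j)); rewrite paddr_eq0 ?sqr_ge0 // !sqrf_eq0.
by case/andP => /eqP-> /eqP->.
Qed.

Lemma polar_decomposition p : (0 < n)%N -> exists E1 E2 : 'I_n -> R,
  \sum_(j < n) (E1 j ^+ 2 + E2 j ^+ 2) = 1 /\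
  forall j, hx p j = Num.sqrt (znorm2 p) * E1 j /\ hy p j = Num.sqrt (znorm2 p) * E2 j.
Proof.
move=> n_gt0; have [z0|z_neq0] := eqVneq (znorm2 p) 0.
  exists (fun j => (nat_of_ord j == 0)%N%:R), (fun _ => 0); split.
    case: n n_gt0 => // m _; rewrite big_ord_recl big1 => [|j _] /=.
      by rewrite expr1n expr0n /= !addr0.
    by rewrite expr0n /= add0r.
  by move=> j; rewrite z0 sqrtr0 !mul0r; apply: znorm2_eq0.
have rho_gt0 : 0 < Num.sqrt (znorm2 p) by rewrite sqrtr_gt0 lt_def z_neq0 znorm2_ge0.
exists (fun j => hx p j / Num.sqrt (znorm2 p)), (fun j => hy p j / Num.sqrt (znorm2 p)).
split => [|j]; last by split; rewrite mulrC divfK ?gt_eqF.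
rewrite -(divff z_neq0) mulr_suml; apply: eq_bigr => j _.
by rewrite !expr_div_n sqr_sqrtr ?znorm2_ge0 // mulrDl.
Qed.

Lemma distH_eboundary_hplane_le {Om zeta w} :
  eboundary Om w -> hplane zeta w -> distH zeta (eboundary Om `&` hplane zeta) <= dH zeta w.
Proof. by move=> bd_w plane_w; apply: distH_le_dH. Qed.

Definition good_center Om xi (d : R) zeta :=
  dH zeta xi < d / 3 /\ distH zeta (eboundary Om `&` hplane zeta) <= 19 / 10 * d.

Section Slice.
Variables (xi : hpt) (d s : R) (E1 E2 : 'I_n -> R).
Hypotheses (E_unit : \sum_(j < n) (E1 j ^+ 2 + E2 j ^+ 2) = 1) (s_sign : s ^+ 2 = 1).
Hypothesis d_gt0 : 0 < d.

(* The group embedding (x + i y, t) |-> (d (x + i s y) e, s d^2 t) of H^1 into H^n,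
   for the unit vector e = E1 + i E2; it scales the gauge by d. *)
Definition frame (x y t : R) : hpt :=
  Hpt (fun j => d * (x * E1 j + y * (- s * E2 j))) (fun j => d * (x * E2 j + y * (s * E1 j)))
      (s * d ^+ 2 * t).

Definition slice x y t := hmul xi (frame x y t).

Lemma frame_diff xp yp tp xq yq tq :
  hmul (hinv (frame xq yq tq)) (frame xp yp tp) =
  frame (xp - xq) (yp - yq) (tp - tq + 2 * (xq * yp - yq * xp)).
Proof.
apply: hptE => [j|j|] /=; try ring.
rewrite (eq_bigr (fun j => s * d ^+ 2 * (xq * yp - yq * xp) * (E1 j ^+ 2 + E2 j ^+ 2))).
  by rewrite -mulr_sumr E_unit; ring.
by move=> j _; ring.
Qed.

Lemma gauge_frame x y t : gauge (frame x y t) = d * gauge1 x y t.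
Proof.
rewrite /gauge.
have -> : znorm2 (frame x y t) = d ^+ 2 * (x ^+ 2 + y ^+ 2).
  rewrite -[RHS]mulr1 -E_unit mulr_sumr; apply: eq_bigr => j _ /=.
  by rewrite -[y ^+ 2]mul1r -s_sign; ring.
have -> : (d ^+ 2 * (x ^+ 2 + y ^+ 2)) ^+ 2 + ht (frame x y t) ^+ 2 =
    (d ^+ 2) ^+ 2 * ((x ^+ 2 + y ^+ 2) ^+ 2 + t ^+ 2).
  by rewrite /= !exprMn s_sign; ring.
rewrite sqrtrM ?sqr_ge0 // sqrtr_sqr ger0_norm ?sqr_ge0 //.
by rewrite sqrtrM ?sqr_ge0 // sqrtr_sqr ger0_norm ?ltW.
Qed.

Lemma slice000 : slice 0 0 0 = xi.
Proof. by apply: hptE => [j|j|] /=; [ring | ring | rewrite big1 => [|j _]; ring]. Qed.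

Lemma seg_slice l xp yp tp xq yq tq :
  seg (slice xp yp tp) (slice xq yq tq) l =
  slice ((1 - l) * xp + l * xq) ((1 - l) * yp + l * yq) ((1 - l) * tp + l * tq).
Proof.
apply: hptE => [j|j|] /=; try ring.
set Sp := \sum_(j < n) _; set Sq := \sum_(j < n) _; set Sl := \sum_(j < n) _.
have -> : Sl = (1 - l) * Sp + l * Sq.
  by rewrite /Sl !mulr_sumr -big_split; apply: eq_bigr => j _ /=; ring.
ring.
Qed.

Lemma hplane_slice {xp yp tp xq yq tq} :
  tq - tp + 2 * (xp * yq - yp * xq) = 0 -> hplane (slice xp yp tp) (slice xq yq tq).
Proof.
by move=> eq0; apply/hplane_hinv_hmul; rewrite /slice hinv_hmul2l frame_diff /= eq0 mulr0.
Qed.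

Lemma dH_slice xp yp tp xq yq tq :
  dH (slice xp yp tp) (slice xq yq tq) =
  d * gauge1 (xp - xq) (yp - yq) (tp - tq + 2 * (xq * yp - yq * xp)).
Proof. by rewrite /dH /slice hinv_hmul2l frame_diff gauge_frame. Qed.

Lemma dH_center_slice x y t : dH xi (slice x y t) = d * gauge1 x y t.
Proof.
rewrite -[in X in dH X]slice000 dH_slice !sub0r -gauge1N.
by congr (_ * gauge1 _ _ _); ring.
Qed.

Lemma dH_slice_center x y t : dH (slice x y t) xi = d * gauge1 x y t.
Proof.
rewrite -[in X in dH _ X]slice000 dH_slice !subr0.
by congr (_ * gauge1 _ _ _); ring.
Qed.

Lemma dH_slice_hplane xp yp tp xq yq tq :
  tq - tp + 2 * (xp * yq - yp * xq) = 0 ->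
  dH (slice xp yp tp) (slice xq yq tq) = d * Num.sqrt ((xp - xq) ^+ 2 + (yp - yq) ^+ 2).
Proof.
move=> eq0; rewrite dH_slice -gauge1_horizontal; congr (_ * gauge1 _ _ _).
by rewrite -oppr0 -eq0; ring.
Qed.

Variables (Om : set hpt) (r T : R).
Hypotheses (r_ge0 : 0 <= r) (T_ge0 : 0 <= T).
Hypotheses (r_le : r <= 1004 / 1000) (T_le : T <= 1004 / 1000).
Hypothesis w_bd : eboundary Om (slice r 0 T).

Lemma good_center_flat : T <= 3 / 5 * r -> exists zeta, good_center Om xi d zeta.
Proof.
move=> le_Tr; have [b [b_ge0 b_le def_T le_rb]] := flat_case_bounds _ _ r_ge0 T_ge0 le_Tr r_le.
have w_in_plane : T - 0 + 2 * (0 * 0 - b * r) = 0 by rewrite def_T; ring.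
exists (slice 0 b 0); split.
  by rewrite dH_slice_center gauge1_axis //; have := d_gt0; nra.
apply: le_trans (distH_eboundary_hplane_le w_bd (hplane_slice w_in_plane)) _.
rewrite dH_slice_hplane // [_ * d]mulrC ler_pM2l //.
by apply: sqrtr_le; rewrite ?sub0r ?subr0 ?sqrrN //; lra.
Qed.

Lemma good_center_steep : eopen Om -> econvex Om -> Om xi -> distH xi (eboundary Om) = d ->
  3 / 5 * r < T -> exists zeta, good_center Om xi d zeta.
Proof.
move=> Om_open Om_convex Om_xi dist_d lt_rT.
have [l [qx [qt [l01 def_qt qx01 def_r def_T]]]] := steep_case_witness _ _ r_ge0 lt_rT T_le.
have in_Om p : dH xi p < d -> Om p by rewrite -dist_d; apply: lt_dist_eboundary_in.
pose zeta := slice 0 (3 / 10) 0; pose p := slice (- (1 / 4)) 0 (99 / 100).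
have Om_zeta : Om zeta.
  by apply: in_Om; rewrite dH_center_slice gauge1_axis; have := d_gt0; lra.
have Om_p : Om p.
  apply: in_Om; rewrite dH_center_slice -[X in _ < X]mulr1 ltr_pM2l // gauge1_lt1 //.
  by rewrite !expr2; lra.
have Om'_q : ~ Om (slice qx 0 qt).
  move=> Om_q; apply: eopen_eboundary Om_open w_bd _.
  have [l_ge0 l_le1] := andP l01.
  have : Om (seg (slice qx 0 qt) p l) := Om_convex _ _ _ Om_q Om_p l_ge0 l_le1.
  by rewrite seg_slice def_r def_T !mulr0 addr0.
have [u u01 bd_u] := seg_eboundary _ _ _ Om_zeta Om'_q.
rewrite seg_slice !mulr0 !addr0 !add0r in bd_u.
have u_in_plane : u * qt - 0 + 2 * (0 * ((1 - u) * (3 / 10)) - 3 / 10 * (u * qx)) = 0.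
  by rewrite def_qt; field.
exists zeta; split; first by rewrite dH_slice_center gauge1_axis; have := d_gt0; lra.
apply: le_trans (distH_eboundary_hplane_le bd_u (hplane_slice u_in_plane)) _.
rewrite dH_slice_hplane // [_ * d]mulrC ler_pM2l //; apply: sqrtr_le; first lra.
have -> : (0 - u * qx) ^+ 2 + (3 / 10 - (1 - u) * (3 / 10)) ^+ 2 =
    (u * qx) ^+ 2 + (3 / 10 * u) ^+ 2 by ring.
exact: steep_case_distance.
Qed.

Lemma good_center_slice : eopen Om -> econvex Om -> Om xi -> distH xi (eboundary Om) = d ->
  exists zeta, good_center Om xi d zeta.
Proof.
move=> Om_open Om_convex Om_xi dist_d.
by case: (leP T (3 / 5 * r)) => [/good_center_flat | /good_center_steep]; apply.
Qed.

End Slice.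

Lemma frame_decomposition p (d : R) : (0 < n)%N -> 0 < d ->
  exists (s : R) (E1 E2 : 'I_n -> R) (r T : R),
    [/\ \sum_(j < n) (E1 j ^+ 2 + E2 j ^+ 2) = 1, s ^+ 2 = 1,
         0 <= r, 0 <= T & p = frame d s E1 E2 r 0 T].
Proof.
move=> n_gt0 d_gt0; have [E1 [E2 [E_unit pE]]] := polar_decomposition p n_gt0.
pose s : R := if 0 <= ht p then 1 else -1.
have s_sign : s ^+ 2 = 1 by rewrite /s; case: ifP; rewrite ?sqrrN expr1n.
have sht_ge0 : 0 <= s * ht p.
  by rewrite /s; case: ifP => [|/negbT]; rewrite ?mul1r // -ltNge mulN1r oppr_ge0 => /ltW.
exists s, E1, E2, (Num.sqrt (znorm2 p) / d), (s * ht p / d ^+ 2).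
split; rewrite ?divr_ge0 ?sqrtr_ge0 ?exprn_ge0 ?(ltW d_gt0) //.
have d_neq0 : d != 0 by rewrite gt_eqF.
apply: hptE => [j|j|] /=.
- by case: (pE j) => -> _; field.
- by case: (pE j) => _ ->; field.
- have -> : s * d ^+ 2 * (s * ht p / d ^+ 2) = s ^+ 2 * ht p by field.
  by rewrite s_sign mul1r.
Qed.

Lemma exists_good_center Om xi : (0 < n)%N -> eopen Om -> econvex Om -> Om xi ->
  0 < distH xi (eboundary Om) -> exists zeta, good_center Om xi (distH xi (eboundary Om)) zeta.
Proof.
move=> n_gt0 Om_open Om_convex Om_xi; set d := distH _ _ => d_gt0.
have d_inf : has_inf [set dH xi w | w in eboundary Om].
  split; last by exists 0 => _ [w _ <-]; apply: dH_ge0.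
  by apply/set0P/eqP => empty; move: d_gt0; rewrite /d /distH empty inf0 ltxx.
have [_ [w bd_w <-] lt_w] := inf_adherent (divr_gt0 d_gt0 (ltr0n _ 1000)) d_inf.
have [s [E1 [E2 [r [T [E_unit s_sign r_ge0 T_ge0 def_w]]]]]] :=
  frame_decomposition (hmul (hinv xi) w) d n_gt0 d_gt0.
have w_slice : w = slice xi d s E1 E2 r 0 T by rewrite /slice -def_w hmul_hinvKl.
have [r_le T_le] : r <= 1004 / 1000 /\ T <= 1004 / 1000.
  apply: near_unit_bounds r_ge0 T_ge0 _; apply: gauge1_lt; first lra.
  rewrite -(ltr_pM2l d_gt0) -(dH_center_slice xi _ _ _ _ E_unit s_sign d_gt0) -w_slice.
  by rewrite -/(distH _ _) -/d in lt_w; lra.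
rewrite w_slice in bd_w.
by apply: (good_center_slice _ _ _ _ _ E_unit s_sign d_gt0 _ _ _ r_ge0 T_ge0 r_le T_le bd_w).
Qed.

Lemma calD_le Om xi zeta : dH zeta xi < distH xi (eboundary Om) / 3 ->
  calD Om xi <= distH zeta (eboundary Om `&` hplane zeta).
Proof.
move=> zeta_near; apply: inf_le_of_ge0 => [_ [z _ <-]|]; first exact: distH_ge0.
by exists zeta => // e e_gt0; exists zeta; split; rewrite // /eball /= eucl2_xx exprn_gt0.
Qed.

Lemma calD_dist0 Om xi : distH xi (eboundary Om) = 0 -> calD Om xi = 0.
Proof.
move=> dist0; rewrite /calD dist0 mul0r (_ : eclosure _ = set0) ?image_set0 ?inf0 //.
apply/seteqP; split => // z /(_ 1 ltr01) [q [q_near _]].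
by have := dH_ge0 q xi; rewrite /ballH /= in q_near; lra.
Qed.

End Heisenberg.

Theorem proposition4p4 (R : realType) (n : nat) (Om : set (hpt R n)) :
  (0 < n)%N -> eopen Om -> hor_bounded Om -> econvex Om ->
  forall xi : hpt R n, Om xi ->
    calD Om xi <=
      (Num.sqrt (Num.sqrt (97 : R)) / 2 + 3^-1) * distH xi (eboundary Om).
Proof.
move=> n_gt0 Om_open _ Om_convex xi Om_xi.
have [dist0|dist_neq0] := eqVneq (distH xi (eboundary Om)) 0.
  by rewrite calD_dist0 // dist0 mulr0.
have dist_gt0 : 0 < distH xi (eboundary Om) by rewrite lt_def dist_neq0 distH_ge0.
have [zeta [zeta_near zeta_dist]] :=
  exists_good_center _ _ n_gt0 Om_open Om_convex Om_xi dist_gt0.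
apply: le_trans (calD_le _ _ _ zeta_near) _; apply: le_trans zeta_dist _.
by rewrite ler_pM2r // nineteen_tenths_le.
Qed.
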